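(* The standard 2-cocycle $\alpha(A,B)=\mathrm{tr}\big(\pi([A,B])-[\pi(A),\pi(B)]\big)$ on $\overline{gl}(\infty)$ is multiplicative: for all $A,B,C\in\overline{gl}(\infty)$, $\alpha(AB,C)+\alpha(BC,A)+\alpha(CA,B)=0$.
   Context: $\overline{gl}(\infty)$ is the associative algebra (and Lie algebra under the commutator) of complex matrices $A=(a_{ij})_{i,j\in\mathbb Z}$ with finitely many nonzero diagonals, i.e. there is $r=r(A)$ with $a_{ij}=0$ whenever $|i-j|>r$, with the usual matrix product. For $A\in\overline{gl}(\infty)$, $\pi(A)$ is the matrix with entries $\pi(A)_{ij}=a_{ij}$ if $i\ge0$ and $j\ge0$, and $0$ otherwise. The matrix $\pi([A,B])-[\pi(A),\pi(B)]$ has finitely many nonzero entries, so its trace is defined. *)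

From HB Require Import structures.
From mathcomp Require Import all_boot all_order all_algebra.
From mathcomp Require Import boolp classical_sets fsbigop reals.
From mathcomp Require Import complex.
Set Implicit Arguments. Unset Strict Implicit. Unset Printing Implicit Defensive.
Import Order.TTheory GRing.Theory Num.Theory.
Local Open Scope classical_set_scope.
Local Open Scope ring_scope.

Definition zmat (R : realType) := int -> int -> R[i].

(* A belongs to gl-bar(infinity): finitely many nonzero diagonals. *)
Definition in_glbar (R : realType) (A : zmat R) : Prop :=
  exists r : nat, forall i j : int, (r < `|i - j|)%N -> A i j = 0.

(* Usual matrix product: (AB)_{ij} = sum_k a_{ik} b_{kj}, the sum being over
   the (finite, for banded A B) support of k |-> a_{ik} b_{kj}. *)
Definition zmul (R : realType) (A B : zmat R) : zmat R :=
  fun i j => \sum_(k \in [set: int]) (A i k * B k j).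

Definition zsub (R : realType) (A B : zmat R) : zmat R := fun i j => A i j - B i j.

Definition zcomm (R : realType) (A B : zmat R) : zmat R :=
  zsub (zmul A B) (zmul B A).

Definition zpi (R : realType) (A : zmat R) : zmat R :=
  fun i j => if (0 <= i) && (0 <= j) then A i j else 0.

Definition ztr (R : realType) (M : zmat R) : R[i] :=
  \sum_(i \in [set: int]) M i i.

Definition alpha (R : realType) (A B : zmat R) : R[i] :=
  ztr (zsub (zpi (zcomm A B)) (zcomm (zpi A) (zpi B))).

From HB Require Import structures.
From mathcomp Require Import all_boot all_order all_algebra.
From mathcomp Require Import boolp classical_sets fsbigop reals.
From mathcomp Require Import complex.
From mathcomp Require Import zify ring.
Set Implicit Arguments. Unset Strict Implicit. Unset Printing Implicit Defensive.
Import Order.TTheory GRing.Theory Num.Theory.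
Local Open Scope ring_scope.

(* For banded X and Y, alpha(X, Y) = sum_(i >= 0 > k) (X_ik Y_ki - Y_ik X_ki).
   Expanding the products, each of the six terms of
   alpha(AB, C) + alpha(BC, A) + alpha(CA, B) becomes a sum of
   +/- A_pq B_qr C_rp over the (p, q, r) subject to two sign conditions, and
   with P = [p >= 0], Q = [q >= 0], R = [r >= 0] the total coefficient is
   (1 - R)(P - Q) + (1 - P)(Q - R) + (1 - Q)(R - P) = 0.  Bandedness makes all
   the sums finite, so they can be taken over one fixed window of integers. *)

Lemma fsbig_seq_supp (T : choiceType) (V : nmodType) (F : T -> V) (s : seq T) :
  uniq s -> (forall k, F k != 0 -> k \in s) ->
  \sum_(k \in [set: T]) F k = \sum_(k <- s) F k.
Proof.
move=> us sF; rewrite (fsbig_seq _ _ us); apply/esym/fsbig_widen => // k [_ /= sk].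
by apply/eqP; apply: contraT => /sF.
Qed.

Definition win (a : int) (n : nat) : seq int := [seq a + i%:Z | i <- iota 0 n].

Lemma mem_win a n k : (k \in win a n) = (a <= k < a + n%:Z).
Proof.
apply/mapP/idP => [[m] | /andP[ak kn]].
  by rewrite mem_iota => /andP[_ ?] ->; lia.
by exists `|k - a|%N; [rewrite mem_iota | ]; lia.
Qed.

Lemma win_uniq a n : uniq (win a n).
Proof. by rewrite map_inj_uniq ?iota_uniq // => i j /=; lia. Qed.

Definition window (s : nat) : seq int := win (- (2 * s)%:Z) (4 * s).

Lemma mem_window s k : (k \in window s) = (- (2 * s)%:Z <= k < (2 * s)%:Z).
Proof. by rewrite mem_win; lia. Qed.

Lemma window_uniq s : uniq (window s).
Proof. exact: win_uniq. Qed.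

Definition sum3 (T : Type) (V : nmodType) (l : seq T) (F : T -> T -> T -> V) :=
  \sum_(p <- l) \sum_(q <- l) \sum_(r <- l) F p q r.

Lemma eq_sum3 (T : Type) (V : nmodType) (l : seq T) (F G : T -> T -> T -> V) :
  (forall p q r, F p q r = G p q r) -> sum3 l F = sum3 l G.
Proof.
by move=> FG; apply: eq_bigr => p _; apply: eq_bigr => q _; apply: eq_bigr.
Qed.

Lemma sum3_rot (T : Type) (V : nmodType) (l : seq T) (F : T -> T -> T -> V) :
  sum3 l F = sum3 l (fun p q r => F r p q).
Proof.
by rewrite /sum3; under [RHS]eq_bigr do rewrite exchange_big; rewrite [RHS]exchange_big.
Qed.

Lemma sum3D (T : Type) (V : nmodType) (l : seq T) (F G : T -> T -> T -> V) :
  sum3 l F + sum3 l G = sum3 l (fun p q r => F p q r + G p q r).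
Proof.
rewrite /sum3 -big_split; apply: eq_bigr => p _.
by rewrite -big_split; apply: eq_bigr => q _; rewrite -big_split.
Qed.

Lemma sum3B (T : Type) (V : zmodType) (l : seq T) (F G : T -> T -> T -> V) :
  sum3 l F - sum3 l G = sum3 l (fun p q r => F p q r - G p q r).
Proof.
rewrite /sum3 -sumrB; apply: eq_bigr => p _.
by rewrite -sumrB; apply: eq_bigr => q _; rewrite -sumrB.
Qed.

Lemma sum3_eq0 (T : Type) (V : nmodType) (l : seq T) (F : T -> T -> T -> V) :
  (forall p q r, F p q r = 0) -> sum3 l F = 0.
Proof.
by move=> F0; apply: big1 => p _; apply: big1 => q _; apply: big1 => r _.
Qed.

Section Banded.
Variable R : realType.
Implicit Types X Y Z : zmat R.

Definition band X (s : nat) :=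
  forall i j : int, (s < `|i - j|)%N -> X i j = 0.

Lemma band_widen X r s : (r <= s)%N -> band X r -> band X s.
Proof. by move=> rs bX i j ij; apply: bX; lia. Qed.

Lemma band_zmul X Y r t : band X r -> band Y t -> band (zmul X Y) (r + t).
Proof.
move=> bX bY i j ij; rewrite /zmul fsbig1 // => k _.
have [ik | ik] := leqP `|i - k| r; last by rewrite bX ?mul0r.
by rewrite (bY k j) ?mulr0 //; lia.
Qed.

Lemma band_zpi X s : band X s -> band (zpi X) s.
Proof. by move=> bX i j ij; rewrite /zpi bX ?if_same. Qed.

Lemma zmul_seq X Y s (ks : seq int) i j :
  band X s -> uniq ks -> (forall k, (`|i - k| <= s)%N -> k \in ks) ->
  zmul X Y i j = \sum_(k <- ks) X i k * Y k j.
Proof.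
move=> bX uks ksP; apply: fsbig_seq_supp => // k; apply: contraR => kks.
by rewrite bX ?mul0r // ltnNge; apply: contra kks; apply: ksP.
Qed.

Lemma fsbig2_seq (F : int -> int -> R[i]) (ks : seq int) :
  uniq ks -> (forall i k, F i k != 0 -> (i \in ks) && (k \in ks)) ->
  \sum_(i \in [set: int]) \sum_(k \in [set: int]) F i k =
  \sum_(i <- ks) \sum_(k <- ks) F i k.
Proof.
move=> uks FP; rewrite (eq_fsbigr (fun i => \sum_(k <- ks) F i k)); last first.
  by move=> i _; apply: fsbig_seq_supp => // k /FP /andP[].
apply: fsbig_seq_supp => // i; apply: contraR => iks.
by rewrite big1 // => k _; apply/eqP; apply: contraR iks => /FP /andP[].
Qed.

Definition cross X Y : R[i] :=
  \sum_(i \in [set: int]) \sum_(k \in [set: int])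
    (if (0 <= i) && (k < 0) then X i k * Y k i else 0).

Lemma alpha_diag X Y s i : band X s -> band Y s ->
  zsub (zpi (zcomm X Y)) (zcomm (zpi X) (zpi Y)) i i =
  \sum_(k \in [set: int])
    (if (0 <= i) && (k < 0) then X i k * Y k i - Y i k * X k i else 0).
Proof.
move=> bX bY; rewrite /zsub {1}/zpi /zcomm /zsub.
have [i0 | i0] /= := boolP (0 <= i); last first.
  by rewrite /zmul !fsbig1 ?subrr // => k _; rewrite /zpi (negbTE i0) mul0r.
pose ks := win (i - s%:Z) (2 * s + 1).
have ksP k : (`|i - k| <= s)%N -> k \in ks by rewrite mem_win; lia.
have ks_uniq : uniq ks := win_uniq _ _.
have [bpX bpY] := (band_zpi bX, band_zpi bY).
rewrite !(zmul_seq _ _ _ ks_uniq ksP) //.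
rewrite (fsbig_seq_supp ks_uniq); last first.
  move=> k; apply: contraR; rewrite mem_win => kks; case: ifP => // _.
  by rewrite bX ?bY ?mulr0 ?mul0r ?subrr //; lia.
rewrite -!sumrB; apply: eq_bigr => k _; rewrite /zpi i0 ltNge.
by case: (0 <= k) => /=; rewrite ?mulr0 ?mul0r ?subrr ?subr0.
Qed.

Lemma quadrant_window (F : int -> int -> R[i]) s :
  (forall i k, 0 <= i -> k < 0 -> (s < `|i - k|)%N -> F i k = 0) ->
  \sum_(i \in [set: int]) \sum_(k \in [set: int])
    (if (0 <= i) && (k < 0) then F i k else 0) =
  \sum_(i <- window s) \sum_(k <- window s)
    (if (0 <= i) && (k < 0) then F i k else 0).
Proof.
move=> F0; apply: fsbig2_seq => [|i k]; first exact: window_uniq.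
case: ifP => [/andP[i0 k0] | _]; last by rewrite eqxx.
by apply: contraNT; rewrite !mem_window => ?; rewrite F0 //; lia.
Qed.

Lemma cross_window X Y s : band Y s ->
  cross X Y = \sum_(i <- window s) \sum_(k <- window s)
    (if (0 <= i) && (k < 0) then X i k * Y k i else 0).
Proof.
move=> bY; apply: (@quadrant_window (fun i k => X i k * Y k i)) => i k _ _ ik.
by rewrite bY ?mulr0 //; lia.
Qed.

Lemma alpha_cross X Y s : band X s -> band Y s ->
  alpha X Y = cross X Y - cross Y X.
Proof.
move=> bX bY; rewrite (cross_window X bY) (cross_window Y bX).
rewrite /alpha /ztr (eq_fsbigr _ _ (in1W (fun i => alpha_diag i bX bY))).
rewrite (@quadrant_window _ s) => [|i k _ _ ik]; last first.
  by rewrite bX ?(bX k) ?mulr0 ?mul0r ?subrr //; lia.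
rewrite -sumrB; apply: eq_bigr => i _; rewrite -sumrB; apply: eq_bigr => k _.
by case: ifP; rewrite ?subrr.
Qed.

Definition trace3 s X Y Z (c : int -> int -> int -> bool) : R[i] :=
  sum3 (window s) (fun p q r => if c p q r then X p q * Y q r * Z r p else 0).

Lemma trace3_rot X Y Z s c :
  trace3 s X Y Z c = trace3 s Y Z X (fun p q r => c r p q).
Proof.
rewrite /trace3 sum3_rot; apply: eq_sum3 => p q r.
by case: (c r p q); rewrite // -mulrA mulrC.
Qed.

Lemma cross_zmull X Y Z s : band X s -> band Z s ->
  cross (zmul X Y) Z = trace3 s X Y Z (fun p q r => (0 <= p) && (r < 0)).
Proof.
move=> bX bZ; rewrite (cross_window _ bZ) /trace3 /sum3; apply: eq_bigr => i _.
rewrite [RHS]exchange_big; apply: eq_bigr => k _ /=.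
case: ifP => [/andP[i0 k0] | _]; last by rewrite big1.
have [i_lt | i_ge] := ltrP i s%:Z.
  rewrite (zmul_seq _ _ bX (window_uniq s)) ?big_distrl // => j.
  by rewrite mem_window; lia.
rewrite (bZ k i) ?mulr0 ?big1 // => [j _ | ]; [by rewrite mulr0 | lia].
Qed.

Lemma cross_zmulr X Y Z s : band X s -> band Z s -> band (zmul X Y) s ->
  cross Z (zmul X Y) = trace3 s Z X Y (fun p q r => (0 <= p) && (q < 0)).
Proof.
move=> bX bZ bXY; rewrite (cross_window _ bXY) /trace3 /sum3.
apply: eq_bigr => i _; apply: eq_bigr => k _.
case: ifP => [/andP[i0 k0] | _]; last by rewrite big1.
have [k_lt | k_ge] := ltrP k (- s%:Z).
  rewrite (bZ i k) ?mul0r ?big1 // => [j _ | ]; [by rewrite !mul0r | lia].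
rewrite (zmul_seq _ _ bX (window_uniq s)) => [|j]; last by rewrite mem_window; lia.
by rewrite big_distrr; apply: eq_bigr => j _; exact: mulrA.
Qed.

End Banded.

Theorem mainTheorem17 (R : realType) (A B C : zmat R) :
  in_glbar A -> in_glbar B -> in_glbar C ->
  alpha (zmul A B) C + alpha (zmul B C) A + alpha (zmul C A) B = 0.
Proof.
move=> [ra bA] [rb bB] [rc bC]; set s := (ra + rb + rc)%N.
have bA' : band A s by apply: band_widen bA; lia.
have bB' : band B s by apply: band_widen bB; lia.
have bC' : band C s by apply: band_widen bC; lia.
have bAB : band (zmul A B) s by apply: band_widen (band_zmul bA bB); lia.
have bBC : band (zmul B C) s by apply: band_widen (band_zmul bB bC); lia.
have bCA : band (zmul C A) s by apply: band_widen (band_zmul bC bA); lia.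
rewrite (alpha_cross bAB bC') (alpha_cross bBC bA') (alpha_cross bCA bB').
rewrite (cross_zmull B bA' bC') (cross_zmull C bB' bA') (cross_zmull A bC' bB').
rewrite (cross_zmulr bA' bC' bAB) (cross_zmulr bB' bA' bBC).
rewrite (cross_zmulr bC' bB' bCA).
rewrite !(trace3_rot B C A) !(trace3_rot C A B) /trace3 !sum3B !sum3D.
apply: sum3_eq0 => p q r /=; rewrite !ltNge.
by case: (0 <= p); case: (0 <= q); case: (0 <= r) => /=; ring.
Qed.
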